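(* Let $r\ge 2$ be an integer and let $f\in\mathcal{P}$ (i.e. $f\in\mathcal{P}_c$ for some constant $c>0$). Then $f$ is nowhere differentiable in $\mathbb{R}$.
   Context: $C_p(\mathbb{R})$ denotes the set of all continuous functions $f:\mathbb{R}\to\mathbb{R}$ that are periodic with period $1$ and satisfy $f(0)=0$. Fix an integer $r\ge 2$. For $f\in C_p(\mathbb{R})$ and $(n,k,y)\in\mathbb{N}_0\times\mathbb{Z}\times(0,1)$ (where $\mathbb{N}_0=\mathbb{N}\cup\{0\}$) define $\delta^+_{n,k}(y;f)=\dfrac{f(\frac{k+1}{r^n})-f(\frac{k+y}{r^n})}{\frac{1-y}{r^n}}$ and $\delta^-_{n,k}(y;f)=\dfrac{f(\frac{k+y}{r^n})-f(\frac{k}{r^n})}{\frac{y}{r^n}}$. For a constant $c>0$, $\mathcal{P}_c$ is the set of $f\in C_p(\mathbb{R})$ such that $\delta^+_{n,k}(y;f)-\delta^-_{n,k}(y;f)\le -c$ for all $(n,k,y)\in\mathbb{N}_0\times\mathbb{Z}\times(0,1)$, and $\mathcal{P}=\bigcup_{c>0}\mathcal{P}_c$ (these depend on $r$). *)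

From Stdlib Require Import Reals Lra Lia ZArith.
Open Scope R_scope.

Definition Cp (f : R -> R) : Prop :=
  (forall x, continuity_pt f x) /\ (forall x, f (x + 1) = f x) /\ f 0 = 0.

Definition delta_plus (r : nat) (f : R -> R) (n : nat) (k : Z) (y : R) : R :=
  (f ((IZR k + 1) / (INR r ^ n)) - f ((IZR k + y) / (INR r ^ n)))
  / ((1 - y) / (INR r ^ n)).

Definition delta_minus (r : nat) (f : R -> R) (n : nat) (k : Z) (y : R) : R :=
  (f ((IZR k + y) / (INR r ^ n)) - f (IZR k / (INR r ^ n)))
  / (y / (INR r ^ n)).

Definition Pc (r : nat) (c : R) (f : R -> R) : Prop :=
  Cp f /\
  forall (n : nat) (k : Z) (y : R), 0 < y < 1 ->
    delta_plus r f n k y - delta_minus r f n k y <= - c.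

Definition P (r : nat) (f : R -> R) : Prop := exists c, 0 < c /\ Pc r c f.

Definition differentiable_at (f : R -> R) (x : R) : Prop :=
  exists l, derivable_pt_lim f x l.

(** Taking [y = 1/2], the quantity [δ⁺ - δ⁻] on the [r]-adic interval
    [[k/rⁿ, (k+1)/rⁿ]] of length [h = r⁻ⁿ] is [2/h] times the second difference
    [f(a+h) - 2 f(a+h/2) + f(a)].  If [f] were differentiable at [x], the
    linear parts cancel in this second difference, so on the intervals that
    contain [x] it is [o(h)] as [h → 0]; hence [δ⁺ - δ⁻ → 0] along them,
    contradicting [δ⁺ - δ⁻ <= -c]. *)

From Stdlib Require Import Reals Lra Lia.
Open Scope R_scope.

Lemma derivable_pt_lim_linear_approx (f : R -> R) (x l eps : R) :
  derivable_pt_lim f x l -> 0 < eps ->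
  exists d, 0 < d /\ forall p, Rabs (p - x) < d ->
    Rabs (f p - f x - l * (p - x)) <= eps * Rabs (p - x).
Proof.
  intros Hl Heps.
  destruct (Hl eps Heps) as [[d Hd] Hquot]; simpl in Hquot.
  exists d; split; [exact Hd |]. intros p Hp.
  destruct (Req_dec (p - x) 0) as [Hpx | Hpx].
  - rewrite Hpx, Rabs_R0, !Rmult_0_r, Rminus_0_r.
    replace p with x by lra. rewrite Rminus_diag, Rabs_R0. lra.
  - specialize (Hquot (p - x) Hpx Hp).
    replace (x + (p - x)) with p in Hquot by ring.
    replace (f p - f x - l * (p - x)) with (((f p - f x) / (p - x) - l) * (p - x))
      by (field; exact Hpx).
    rewrite Rabs_mult. apply Rmult_le_compat_r; [apply Rabs_pos | lra].
Qed.

Lemma second_difference_small (f : R -> R) (x l eps : R) :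
  derivable_pt_lim f x l -> 0 < eps ->
  exists d, 0 < d /\ forall a h, 0 < h < d -> a <= x <= a + h ->
    Rabs (f (a + h) - 2 * f (a + h / 2) + f a) <= eps * h.
Proof.
  intros Hl Heps.
  destruct (derivable_pt_lim_linear_approx f x l (eps / 4) Hl) as [d [Hd Happrox]];
    [lra |].
  exists d; split; [exact Hd |]. intros a h Hh Hax.
  set (err p := f p - f x - l * (p - x)).
  assert (Herr : forall p, a <= p <= a + h -> - (eps / 4 * h) <= err p <= eps / 4 * h).
  { intros p Hp.
    assert (Hpx : Rabs (p - x) <= h) by (apply Rabs_le; lra).
    assert (Habs : Rabs (err p) <= eps / 4 * h).
    { apply Rle_trans with (eps / 4 * Rabs (p - x)).
      - apply Happrox. lra.
      - apply Rmult_le_compat_l; lra. }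
    pose proof (Rle_abs (err p)). pose proof (Rle_abs (- err p)).
    rewrite Rabs_Ropp in *. lra. }
  (* The affine part [f x + l (p - x)] has zero second difference. *)
  replace (f (a + h) - 2 * f (a + h / 2) + f a)
    with (err (a + h) - 2 * err (a + h / 2) + err a) by (unfold err; field).
  pose proof (Herr (a + h) ltac:(lra)) as Hb.
  pose proof (Herr (a + h / 2) ltac:(lra)) as Hm.
  pose proof (Herr a ltac:(lra)) as Ha.
  apply Rabs_le. lra.
Qed.

Lemma delta_half_second_difference (r : nat) (f : R -> R) (n : nat) (k : Z) :
  (0 < r)%nat ->
  let h := / INR r ^ n in
  let a := IZR k * h in
  delta_plus r f n k (/ 2) - delta_minus r f n k (/ 2)
  = 2 / h * (f (a + h) - 2 * f (a + h / 2) + f a).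
Proof.
  intros Hr h a.
  assert (Hpow : 0 < INR r ^ n) by (apply pow_lt, lt_0_INR; exact Hr).
  unfold delta_plus, delta_minus.
  replace ((IZR k + 1) / INR r ^ n) with (a + h) by (unfold a, h; field; lra).
  replace ((IZR k + / 2) / INR r ^ n) with (a + h / 2) by (unfold a, h; field; lra).
  replace (IZR k / INR r ^ n) with a by (unfold a, h; field; lra).
  unfold h. field. lra.
Qed.

Lemma r_adic_interval_around (r : nat) (x d : R) :
  (2 <= r)%nat -> 0 < d ->
  exists (n : nat) (k : Z),
    / INR r ^ n < d /\ IZR k * / INR r ^ n <= x <= IZR k * / INR r ^ n + / INR r ^ n.
Proof.
  intros Hr Hd.
  assert (Hr1 : 1 < INR r) by (apply (lt_INR 1); lia).
  destruct (pow_lt_1_zero (/ INR r)) with d as [n Hn]; [| exact Hd |].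
  { rewrite Rabs_right; [| left; apply Rinv_0_lt_compat; lra].
    rewrite <- Rinv_1. apply Rinv_lt_contravar; lra. }
  specialize (Hn n (Nat.le_refl n)).
  rewrite pow_inv, Rabs_right in Hn;
    [| left; apply Rinv_0_lt_compat, pow_lt; lra].
  assert (Hpow : 0 < INR r ^ n) by (apply pow_lt; lra).
  destruct (base_Int_part (x * INR r ^ n)) as [Hlow Hhigh].
  exists n, (Int_part (x * INR r ^ n)). split; [exact Hn |].
  set (k := IZR (Int_part (x * INR r ^ n))) in *.
  assert (Hinv : 0 <= / INR r ^ n) by (left; apply Rinv_0_lt_compat; lra).
  replace x with (x * INR r ^ n * / INR r ^ n) by (field; lra).
  replace (k * / INR r ^ n + / INR r ^ n) with ((k + 1) * / INR r ^ n) by ring.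
  split; apply Rmult_le_compat_r; lra.
Qed.

Theorem theorem2p1 (r : nat) (f : R -> R) :
  (2 <= r)%nat -> P r f -> forall x : R, ~ differentiable_at f x.
Proof.
  intros Hr [c [Hc [_ Hdelta]]] x [l Hl].
  destruct (second_difference_small f x l (c / 4) Hl) as [d [Hd Hsmall]]; [lra |].
  destruct (r_adic_interval_around r x d Hr Hd) as [n [k [Hhd Hx]]].
  set (h := / INR r ^ n) in *.
  assert (Hh : 0 < h) by (apply Rinv_0_lt_compat, pow_lt, (lt_INR 0); lia).
  specialize (Hsmall (IZR k * h) h (conj Hh Hhd) Hx).
  specialize (Hdelta n k (/ 2) ltac:(lra)).
  rewrite delta_half_second_difference in Hdelta by lia. fold h in Hdelta.
  set (S := f (IZR k * h + h) - 2 * f (IZR k * h + h / 2) + f (IZR k * h)) in *.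
  assert (HS : - (c / 4 * h) <= S).
  { pose proof (Rle_abs (- S)). rewrite Rabs_Ropp in *. lra. }
  assert (Hbound : 2 / h * (- (c / 4 * h)) <= 2 / h * S).
  { apply Rmult_le_compat_l; [| exact HS]. left. apply Rdiv_lt_0_compat; lra. }
  replace (2 / h * (- (c / 4 * h))) with (- (c / 2)) in Hbound by (field; lra).
  lra.
Qed.
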